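(* Let $\mathbf{k}$ be a field, $Q$ a finite connected quiver, $\Lambda=\mathbf{k}Q/\mathcal{J}^2$ ($\mathcal{J}$ the arrow ideal), $n\ge2$, and assume $\mathcal{C}\subseteq\operatorname{mod}\Lambda$ is an $n$-cluster tilting subcategory. Then every vertex $v\in Q_0$ satisfies $\delta^-(v)\le2$ and $\delta^+(v)\le2$.
   Context: Modules are finite-dimensional right modules. $\mathcal{C}$ is $n$-cluster tilting if it is functorially finite and $\mathcal{C}=\{X\mid \operatorname{Ext}^i(X,\mathcal{C})=0\ \forall 0<i<n\}=\{X\mid\operatorname{Ext}^i(\mathcal{C},X)=0\ \forall 0<i<n\}$. $\delta^-(v)$ and $\delta^+(v)$ are the numbers of arrows ending, resp. starting, at $v$. *)

From mathcomp Require Import all_boot all_order all_algebra.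
Set Implicit Arguments. Unset Strict Implicit. Unset Printing Implicit Defensive.
Import GRing.Theory.
Local Open Scope ring_scope.

(* Finite-dimensional modules over Lambda = kQ/J^2 are encoded as
   representations of Q satisfying the relations J^2 = 0
   (row-vector convention: the map of arrow a acts by x |-> x *m M). *)
Section RadSqZero.
Variables (k : fieldType) (V E : finType) (s t : E -> V).

(* rarr a u v is the matrix of arrow a; it is forced to be 0 unless
   (u,v) = (s a, t a), which avoids dependent-type casts. *)
Record rep := Rep {
  rdim : V -> nat;
  rarr : E -> forall u v : V, 'M[k]_(rdim u, rdim v);
  rarr_supp : forall a u v, (u, v) != (s a, t a) -> rarr a u v = 0;
  rarr_rel : forall a b u v w, rarr a u v *m rarr b v w = 0
}.

Record hom (M N : rep) := Hom {
  hmap : forall v : V, 'M[k]_(rdim M v, rdim N v);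
  hcomm : forall a u v, rarr M a u v *m hmap v = hmap u *m rarr N a u v
}.

Definition hcompE (M N P : rep) (f : hom M N) (g : hom N P) (v : V) :
  'M[k]_(rdim M v, rdim P v) := hmap f v *m hmap g v.

Definition hom_eq (M N : rep) (f g : hom M N) := forall v, hmap f v = hmap g v.

Definition hom_zero (M N : rep) (f : hom M N) := forall v, hmap f v = 0.

Definition surj (M N : rep) (f : hom M N) := forall v, row_full (hmap f v).

Definition exact_at (L M N : rep) (f : hom L M) (g : hom M N) :=
  forall v, hmap f v *m hmap g v = 0 /\ (kermx (hmap g v) <= hmap f v)%MS.

Definition projective (P : rep) :=
  forall (M N : rep) (g : hom M N) (f : hom P N), surj g ->
    exists h : hom P M, forall v, hcompE h g v = hmap f v.

Definition proj_resolution (X : rep) (P : nat -> rep)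
  (d : forall j, hom (P j.+1) (P j)) (eps : hom (P 0%N) X) :=
  [/\ forall j, projective (P j), surj eps, exact_at (d 0%N) eps
    & forall j, exact_at (d j.+1) (d j)].

(* Ext^(j+1)(X, Y) = 0 : computed from a projective resolution of X as the
   cohomology of Hom(P_*, Y) in degree j+1 (every cocycle is a coboundary). *)
Definition Ext_vanish (i : nat) (X Y : rep) :=
  match i with
  | 0%N => False
  | j.+1 =>
    exists (P : nat -> rep) (d : forall j, hom (P j.+1) (P j)) (eps : hom (P 0%N) X),
      proj_resolution d eps /\
      forall f : hom (P j.+1) Y,
        (forall v, hcompE (d j.+1) f v = 0) ->
        exists g : hom (P j) Y, forall v, hmap f v = hcompE (d j) g v
  end.

Definition functorially_finite (C : rep -> Prop) :=
  (forall M, exists (C0 : rep) (f : hom C0 M), C C0 /\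
     forall (C1 : rep) (g : hom C1 M), C C1 ->
       exists h : hom C1 C0, forall v, hmap g v = hcompE h f v) /\
  (forall M, exists (C0 : rep) (f : hom M C0), C C0 /\
     forall (C1 : rep) (g : hom M C1), C C1 ->
       exists h : hom C0 C1, forall v, hmap g v = hcompE f h v).

Definition n_cluster_tilting (n : nat) (C : rep -> Prop) :=
  [/\ functorially_finite C,
      (forall X, C X <-> forall Y, C Y -> forall i, (0 < i < n)%N -> Ext_vanish i X Y)
    & (forall X, C X <-> forall Y, C Y -> forall i, (0 < i < n)%N -> Ext_vanish i Y X)].

End RadSqZero.

Definition quiver_connected (V E : finType) (s t : E -> V) :=
  forall u w : V,
    connect (fun x y => [exists a, ((s a == x) && (t a == y)) || ((s a == y) && (t a == x))]) u w.

Definition indeg (V E : finType) (t : E -> V) (v : V) := #|[set a | t a == v]|.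
Definition outdeg (V E : finType) (s : E -> V) (v : V) := #|[set a | s a == v]|.

(* The indecomposable projectives P_x and injectives I_w of kQ/J^2 lie in every
   n-cluster tilting subcategory: Ext^i(P_x, -) = 0 and Ext^i(-, I_w) = 0 for
   i > 0.  Since n >= 2, Ext^1(I_w, P_x) = 0, so every extension of I_w by P_x
   splits.  If three arrows a1, a2, a3 leave v, take the extension of I_(t a1)
   by P_v in which a2 additionally sends the basis vector a1 of I_(t a1) at v to
   the basis vector a2 of P_v at t a2.  A splitting would yield one scalar alpha
   with alpha + [c = a2] = 0 for both c = a2 and c = a3, which is absurd.
   Three arrows entering v are excluded in the same way. *)

From Pilot Require Import Defs.
From mathcomp Require Import all_boot all_order all_algebra.
Set Implicit Arguments. Unset Strict Implicit. Unset Printing Implicit Defensive.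
Import GRing.Theory.
Local Open Scope ring_scope.

Section MatrixFacts.
Variable k : fieldType.

Lemma mulmx_pinvmxK_ker m n p (A : 'M[k]_(m, n)) (B : 'M_(m, p)) :
  kermx A *m B = 0 -> A *m (pinvmx A *m B) = B.
Proof.
move=> kerB; apply/eqP; rewrite -subr_eq0 mulmxA -{2}(mul1mx B) -mulmxBl.
have /submxP[D ->] : (A *m pinvmx A - 1%:M <= kermx A)%MS.
  by apply/sub_kermxP; rewrite mulmxBl mul1mx mulmxKpV ?subrr.
by rewrite -mulmxA kerB mulmx0.
Qed.

Definition ind_row (T : finType) (A : {set T}) (o : T) : 'rV[k]_#|A| :=
  \row_j (enum_val j == o)%:R.

Definition ind_mx (T : finType) (A B : {set T}) (o1 o2 : T) : 'M[k]_(#|A|, #|B|) :=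
  \matrix_(i, j) ((enum_val i == o1)%:R * (enum_val j == o2)%:R).

Section Indicators.
Variables (T : finType) (A B C : {set T}).

Lemma sum_enum_val_eq (F : 'I_#|A| -> k) l0 o :
  enum_val l0 = o -> \sum_l (enum_val l == o)%:R * F l = F l0.
Proof.
move=> <-; rewrite (bigD1 l0) //= eqxx mul1r big1 ?addr0 // => l /negbTE.
by rewrite (inj_eq enum_val_inj) => ->; rewrite mul0r.
Qed.

Lemma sum_enum_val_notin (F : 'I_#|A| -> k) o :
  o \notin A -> \sum_l (enum_val l == o)%:R * F l = 0.
Proof.
move=> oA; rewrite big1 // => l _; case: eqP => [evl|_]; last by rewrite mul0r.
by move: (enum_valP l); rewrite evl (negbTE oA).
Qed.

Lemma ind_row_mul p (M : 'M[k]_(#|A|, p)) l o :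
  enum_val l = o -> ind_row A o *m M = row l M.
Proof.
move=> evl; apply/rowP => j; rewrite !mxE; under eq_bigr do rewrite mxE.
exact: sum_enum_val_eq.
Qed.

Lemma ind_row_mul_notin p (M : 'M[k]_(#|A|, p)) o :
  o \notin A -> ind_row A o *m M = 0.
Proof.
move=> oA; apply/rowP => j; rewrite !mxE; under eq_bigr do rewrite mxE.
exact: sum_enum_val_notin.
Qed.

Lemma row_ind_mx i o1 o2 :
  row i (ind_mx A B o1 o2) = (enum_val i == o1)%:R *: ind_row B o2 :> 'rV_#|B|.
Proof. by apply/rowP => j; rewrite !mxE. Qed.

Lemma ind_mx_eq0 o1 o2 : ~~ ((o1 \in A) && (o2 \in B)) -> ind_mx A B o1 o2 = 0.
Proof.
move=> notin; apply/matrixP => i j; rewrite !mxE.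
case: eqP => [evi|_]; last by rewrite mul0r.
case: eqP => [evj|_]; last by rewrite mulr0.
by move: notin; rewrite -evi -evj !enum_valP.
Qed.

Lemma ind_mx_mul0 o1 o2 o3 o4 :
  o2 != o3 -> ind_mx A B o1 o2 *m ind_mx B C o3 o4 = 0 :> 'M_(#|A|, #|C|).
Proof.
move=> o23; apply/matrixP => i j; rewrite !mxE big1 // => l _; rewrite !mxE.
case: (enum_val l =P o2) => [->|_]; last by rewrite mulr0 mul0r.
by rewrite (negbTE o23) mul0r mulr0.
Qed.

Lemma ind_row_mul_ind_mx o1 o2 :
  o1 \in A -> ind_row A o1 *m ind_mx A B o1 o2 = ind_row B o2.
Proof.
move=> o1A; rewrite (ind_row_mul _ (enum_rankK_in o1A o1A)) row_ind_mx.
by rewrite enum_rankK_in // eqxx scale1r.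
Qed.

Lemma tr_ind_mx o1 o2 : (ind_mx A B o1 o2)^T = ind_mx B A o2 o1.
Proof. by apply/matrixP => i j; rewrite !mxE mulrC. Qed.

Lemma ind_mx_mulmx_entry p (M : 'M[k]_(#|B|, p)) o1 o2 i j :
  (ind_mx A B o1 o2 *m M) i j = (enum_val i == o1)%:R * (ind_row B o2 *m M) 0 j.
Proof. by rewrite !mxE big_distrr; apply: eq_bigr => l _; rewrite !mxE -mulrA. Qed.

Lemma mulmx_ind_mx_entry m (M : 'M[k]_(m, #|A|)) o1 o2 i j :
  (M *m ind_mx A B o1 o2) i j = (M *m (ind_row A o1)^T) i 0 * (enum_val j == o2)%:R.
Proof. by rewrite !mxE big_distrl; apply: eq_bigr => l _; rewrite !mxE mulrA. Qed.

End Indicators.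
End MatrixFacts.

Arguments ind_row {k T} A o.
Arguments ind_mx {k T} A B o1 o2.

Local Notation hom := Defs.hom.

Section Homs.
Variables (k : fieldType) (V E : finType) (s t : E -> V).
Local Notation qrep := (rep k s t).

Definition zero_rep : qrep :=
  Rep (rdim := fun _ => 0%N) (rarr := fun _ _ _ => 0)
    (fun _ _ _ _ => erefl) (fun _ _ _ _ _ => mul0mx _ _).

Lemma zero_hom_comm (M N : qrep) a u v :
  rarr M a u v *m 0 = 0 *m rarr N a u v.
Proof. by rewrite mulmx0 mul0mx. Qed.

Definition zero_hom (M N : qrep) : hom M N := Defs.Hom (zero_hom_comm M N).

Lemma id_hom_comm (M : qrep) a u v :
  rarr M a u v *m 1%:M = 1%:M *m rarr M a u v.
Proof. by rewrite mulmx1 mul1mx. Qed.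

Definition id_hom (M : qrep) : hom M M := Defs.Hom (id_hom_comm M).

Lemma comp_hom_comm (L M N : qrep) (f : hom L M) (g : hom M N) a u v :
  rarr L a u v *m hcompE f g v = hcompE f g u *m rarr N a u v.
Proof. by rewrite /hcompE mulmxA hcomm -!mulmxA hcomm. Qed.

Definition comp_hom (L M N : qrep) (f : hom L M) (g : hom M N) : hom L N :=
  Defs.Hom (comp_hom_comm f g).

Lemma sub_hom_comm (M N : qrep) (f g : hom M N) a u v :
  rarr M a u v *m (hmap f v - hmap g v) = (hmap f u - hmap g u) *m rarr N a u v.
Proof. by rewrite mulmxBr mulmxBl !hcomm. Qed.

Definition sub_hom (M N : qrep) (f g : hom M N) : hom M N :=
  Defs.Hom (sub_hom_comm f g).

Lemma zero_rep_projective : projective zero_rep.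
Proof. by move=> M N g f _; exists (zero_hom zero_rep M) => v; rewrite !flatmx0. Qed.

End Homs.

Section Duality.
Variables (k : fieldType) (V E : finType) (s t : E -> V).

Lemma dual_rep_supp (M : rep k s t) a u v :
  (u, v) != (t a, s a) -> (rarr M a v u)^T = 0.
Proof. by move=> uv; rewrite rarr_supp ?trmx0 //; apply: contra uv => /eqP[-> ->]. Qed.

Lemma dual_rep_rel (M : rep k s t) a b u v w :
  (rarr M a v u)^T *m (rarr M b w v)^T = 0.
Proof. by rewrite -trmx_mul rarr_rel trmx0. Qed.

Definition dual_rep (M : rep k s t) : rep k t s := Rep (dual_rep_supp M) (dual_rep_rel M).

Lemma dual_hom_comm (M N : rep k s t) (f : hom M N) a u v :
  rarr (dual_rep N) a u v *m (hmap f v)^T = (hmap f u)^T *m rarr (dual_rep M) a u v.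
Proof. by rewrite /= -!trmx_mul hcomm. Qed.

Definition dual_hom (M N : rep k s t) (f : hom M N) : hom (dual_rep N) (dual_rep M) :=
  Defs.Hom (M := dual_rep N) (N := dual_rep M) (dual_hom_comm f).

End Duality.

Section TransposeAdjunction.
Variables (k : fieldType) (V E : finType) (s t : E -> V).

Lemma hom_trmx_comm (M : rep k s t) (N : rep k t s) (f : hom M (dual_rep N)) a u v :
  rarr N a u v *m (hmap f v)^T = (hmap f u)^T *m rarr (dual_rep M) a u v.
Proof. by apply: trmx_inj; rewrite !trmx_mul !trmxK; apply: esym (hcomm f a v u). Qed.

Definition hom_trmx (M : rep k s t) (N : rep k t s) (f : hom M (dual_rep N)) :
  hom N (dual_rep M) := Defs.Hom (M := N) (N := dual_rep M) (hom_trmx_comm f).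

End TransposeAdjunction.

Section ProjectiveRep.
Variables (k : fieldType) (V E : finType) (s t : E -> V) (x : V).
Local Notation qrep := (rep k s t).

(* [None] stands for the idempotent e_x (present only at u = x) and [Some a]
   for the arrow a : x -> u. *)
Definition proj_basis (u : V) : {set option E} :=
  [set o | if o is Some a then (s a == x) && (t a == u) else u == x].

Lemma proj_basis_None u : (None \in proj_basis u) = (u == x).
Proof. by rewrite inE. Qed.

Lemma proj_basis_Some a u : (Some a \in proj_basis u) = (s a == x) && (t a == u).
Proof. by rewrite inE. Qed.

Definition proj_arr c u u' : 'M[k]_(#|proj_basis u|, #|proj_basis u'|) :=
  ind_mx _ _ None (Some c).

Lemma proj_arr_supp c u u' : (u, u') != (s c, t c) -> proj_arr c u u' = 0.
Proof.
move=> uu'; apply: ind_mx_eq0; apply: contra uu'.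
by rewrite proj_basis_None proj_basis_Some => /andP[/eqP-> /andP[/eqP-> /eqP->]].
Qed.

Lemma proj_arr_rel a b u v w : proj_arr a u v *m proj_arr b v w = 0.
Proof. exact: ind_mx_mul0. Qed.

Definition proj_rep : qrep := Rep proj_arr_supp proj_arr_rel.

Definition proj_hom_row (M : qrep) (m : forall u, 'rV[k]_(rdim M u)) u (o : option E) :
  'rV_(rdim M u) := if o is Some a then m (s a) *m rarr M a (s a) u else m u.

Definition proj_hom_mx (M : qrep) (m : forall u, 'rV[k]_(rdim M u)) u :
  'M_(#|proj_basis u|, rdim M u) := \matrix_i proj_hom_row m u (enum_val i).

Lemma proj_hom_comm (M : qrep) (m : forall u, 'rV[k]_(rdim M u)) c u u' :
  rarr proj_rep c u u' *m proj_hom_mx m u' = proj_hom_mx m u *m rarr M c u u'.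
Proof.
apply/row_matrixP => i; rewrite !row_mul row_ind_mx -scalemxAl !rowK.
case evi: (enum_val i) => [a|] /=.
  by rewrite scale0r -mulmxA rarr_rel mulmx0.
have /eqP ux : u == x by rewrite -proj_basis_None -evi enum_valP.
rewrite scale1r; have [cu'|cu'] := boolP (Some c \in proj_basis u').
  rewrite (ind_row_mul _ (enum_rankK_in cu' cu')) rowK enum_rankK_in //=.
  by move: cu'; rewrite proj_basis_Some ux => /andP[/eqP-> _].
rewrite ind_row_mul_notin // rarr_supp ?mulmx0 //; apply: contra cu'.
by rewrite proj_basis_Some -ux => /eqP[<- <-]; rewrite !eqxx.
Qed.

Definition proj_hom (M : qrep) (m : forall u, 'rV[k]_(rdim M u)) : hom proj_rep M :=
  Defs.Hom (proj_hom_comm m).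

Lemma proj_hom_mul (M N : qrep) (g : hom M N) m m' :
  (forall u, m u *m hmap g u = m' u) ->
  forall u, hmap (proj_hom m) u *m hmap g u = hmap (proj_hom m') u.
Proof.
move=> mm' u; apply/row_matrixP => i; rewrite row_mul !rowK.
by case: (enum_val i) => [a|] /=; rewrite -?mulmxA ?hcomm ?mulmxA mm'.
Qed.

Definition proj_top (N : qrep) (f : hom proj_rep N) u : 'rV[k]_(rdim N u) :=
  ind_row (proj_basis u) None *m hmap f u.

Lemma proj_hom_top (N : qrep) (f : hom proj_rep N) u :
  hmap (proj_hom (proj_top f)) u = hmap f u.
Proof.
apply/row_matrixP => i; rewrite rowK /proj_top.
case evi: (enum_val i) => [a|] /=; last exact: ind_row_mul.
have /andP[sa _] : (s a == x) && (t a == u) by rewrite -proj_basis_Some -evi enum_valP.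
rewrite -mulmxA -(hcomm f) mulmxA /= ind_row_mul_ind_mx ?proj_basis_None //.
exact: ind_row_mul.
Qed.

Lemma proj_rep_lift (M N : qrep) (g : hom M N) (f : hom proj_rep N) :
  (forall u, (hmap f u <= hmap g u)%MS) ->
  exists h : hom proj_rep M, forall u, hmap h u *m hmap g u = hmap f u.
Proof.
move=> fg; exists (proj_hom (fun u => proj_top f u *m pinvmx (hmap g u))) => u.
rewrite (proj_hom_mul (m' := proj_top f)) ?proj_hom_top // => v.
by rewrite mulmxKpV // (submx_trans (submxMl _ _)) ?fg.
Qed.

Lemma proj_rep_projective : projective proj_rep.
Proof. by move=> M N g f gsurj; apply: proj_rep_lift => u; apply: submx_full. Qed.

End ProjectiveRep.

Section InjectiveRep.
Variables (k : fieldType) (V E : finType) (s t : E -> V) (w : V).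

Definition inj_rep : rep k s t := dual_rep (proj_rep k t s w).

Lemma inj_rep_extend (A B : rep k s t) (d : hom A B) (f : hom A inj_rep) :
  (forall u, kermx (hmap d u) *m hmap f u = 0) ->
  exists g : hom B inj_rep, forall u, hmap f u = hmap d u *m hmap g u.
Proof.
move=> kerf; case: (proj_rep_lift (g := dual_hom d) (f := hom_trmx f)) => [u|h hd].
  by rewrite /= -(mulmx_pinvmxK_ker (kerf u)) trmx_mul submxMl.
by exists (hom_trmx h) => u; apply: trmx_inj; rewrite trmx_mul trmxK hd.
Qed.

End InjectiveRep.

Section Extensions.
Variables (k : fieldType) (V E : finType) (s t : E -> V).
Local Notation qrep := (rep k s t).

Lemma hom_factor_mono (A Y Z : qrep) (i : hom Y Z) (q : hom A Z) :
  (forall u, row_free (hmap i u)) -> (forall u, (hmap q u <= hmap i u)%MS) ->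
  exists f : hom A Y, forall u, hmap f u *m hmap i u = hmap q u.
Proof.
move=> ifree qi.
have qi_id u : hmap q u *m pinvmx (hmap i u) *m hmap i u = hmap q u by apply: mulmxKpV.
have comm a u v : rarr A a u v *m (hmap q v *m pinvmx (hmap i v))
                  = hmap q u *m pinvmx (hmap i u) *m rarr Y a u v.
  apply: (row_free_inj (ifree v)); rewrite /= -mulmxA qi_id (hcomm q).
  by rewrite -mulmxA (hcomm i) mulmxA qi_id.
by exists (Defs.Hom comm).
Qed.

Lemma hom_factor_epi (A X Z : qrep) (e : hom A X) (q : hom A Z) :
  surj e -> (forall u, kermx (hmap e u) *m hmap q u = 0) ->
  exists sigma : hom X Z, forall u, hmap e u *m hmap sigma u = hmap q u.
Proof.
move=> esurj kerq; have eq_id u := mulmx_pinvmxK_ker (kerq u).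
have comm a u v : rarr X a u v *m (pinvmx (hmap e v) *m hmap q v)
                  = pinvmx (hmap e u) *m hmap q u *m rarr Z a u v.
  apply: (row_full_inj (esurj u)); rewrite /= mulmxA -(hcomm e) -mulmxA eq_id.
  by rewrite mulmxA eq_id (hcomm q).
by exists (Defs.Hom comm).
Qed.

Lemma Ext1_vanish_split (X Y Z : qrep) (i : hom Y Z) (p : hom Z X) :
  Ext_vanish 1 X Y -> (forall u, row_free (hmap i u)) -> surj p -> exact_at i p ->
  exists sigma : hom X Z, forall u, hmap sigma u *m hmap p u = 1%:M.
Proof.
(* Lift eps along p to h; then d0 h = f i with f a cocycle, so f = d0 g, and
   h - g i vanishes on the image of d0, hence factors through eps. *)
case=> P [d [eps [[Pproj eps_surj eps_exact d_exact] cocycle]]] ifree psurj ip.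
have [h hp] := Pproj 0%N _ _ p eps psurj; rewrite /hcompE in hp.
case: (hom_factor_mono (q := comp_hom (d 0%N) h) ifree) => [u|f fi].
  apply: submx_trans (ip u).2; apply/sub_kermxP.
  by rewrite /= /hcompE -mulmxA hp (eps_exact u).1.
rewrite /= /hcompE in fi.
case: (cocycle f) => [u|g fdg].
  apply: (row_free_inj (ifree u)).
  by rewrite /= /hcompE mul0mx -mulmxA fi mulmxA (d_exact 0%N u).1 mul0mx.
rewrite /hcompE in fdg.
case: (hom_factor_epi (q := sub_hom h (comp_hom g i)) eps_surj) => [u|sigma eps_sigma].
  have /submxP[D ->] := (eps_exact u).2.
  by rewrite -mulmxA /= mulmxBr -fi mulmxA -fdg subrr mulmx0.
exists sigma => u; apply: (row_full_inj (eps_surj u)).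
by rewrite /= mulmx1 mulmxA eps_sigma /= mulmxBl hp -mulmxA (ip u).1 mulmx0 subr0.
Qed.

End Extensions.

Section TwistedExtension.
Variables (k : fieldType) (V E : finType) (s t : E -> V).
Local Notation qrep := (rep k s t).
Variables (X Y : qrep) (F : E -> forall u u', 'M[k]_(rdim X u, rdim Y u')).
Hypothesis F_supp : forall c u u', (u, u') != (s c, t c) -> F c u u' = 0.
Hypothesis F_rarr : forall a b u v w, F a u v *m rarr Y b v w = 0.
Hypothesis rarr_F : forall a b u v w, rarr X a u v *m F b v w = 0.

Definition twist_arr c u u' : 'M[k]_(rdim Y u + rdim X u, rdim Y u' + rdim X u') :=
  block_mx (rarr Y c u u') 0 (F c u u') (rarr X c u u').

Lemma twist_arr_supp c u u' : (u, u') != (s c, t c) -> twist_arr c u u' = 0.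
Proof. by move=> uu'; rewrite /twist_arr !rarr_supp // F_supp // block_mx0. Qed.

Lemma twist_arr_rel a b u v w : twist_arr a u v *m twist_arr b v w = 0.
Proof.
by rewrite mulmx_block !rarr_rel F_rarr rarr_F !(mulmx0, mul0mx, addr0) block_mx0.
Qed.

Definition twist_rep : qrep := Rep twist_arr_supp twist_arr_rel.

Definition twist_incl_mx u : 'M[k]_(rdim Y u, rdim Y u + rdim X u) := row_mx 1%:M 0.

Definition twist_proj_mx u : 'M[k]_(rdim Y u + rdim X u, rdim X u) := col_mx 0 1%:M.

Lemma twist_incl_comm c u u' :
  rarr Y c u u' *m twist_incl_mx u' = twist_incl_mx u *m rarr twist_rep c u u'.
Proof.
rewrite /= /twist_arr /twist_incl_mx mul_row_block mul_mx_row.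
by rewrite !(mulmx1, mul1mx, mul0mx, mulmx0, addr0).
Qed.

Definition twist_incl : hom Y twist_rep :=
  Defs.Hom (N := twist_rep) twist_incl_comm.

Lemma twist_proj_comm c u u' :
  rarr twist_rep c u u' *m twist_proj_mx u' = twist_proj_mx u *m rarr X c u u'.
Proof.
rewrite /= /twist_arr /twist_proj_mx mul_block_col mul_col_mx.
by rewrite !(mulmx1, mul1mx, mul0mx, mulmx0, add0r).
Qed.

Definition twist_proj : hom twist_rep X :=
  Defs.Hom (M := twist_rep) twist_proj_comm.

Lemma twist_incl_free u : row_free (hmap twist_incl u).
Proof.
apply/row_freeP; exists (col_mx 1%:M 0).
by rewrite /= /twist_incl_mx mul_row_col mulmx0 addr0 mulmx1.
Qed.

Lemma twist_proj_surj : surj twist_proj.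
Proof.
move=> u; apply/row_fullP; exists (row_mx 0 1%:M).
by rewrite /= /twist_proj_mx mul_row_col mulmx0 add0r mulmx1.
Qed.

Lemma twist_exact : exact_at twist_incl twist_proj.
Proof.
move=> u; split.
  by rewrite /= /twist_incl_mx /twist_proj_mx mul_row_col mulmx0 mul0mx addr0.
set K := kermx _; apply/submxP; exists (lsubmx K).
have := mulmx_ker (hmap twist_proj u); rewrite -/K -{1}[K]hsubmxK mul_row_col.
rewrite mulmx0 mulmx1 add0r /= /twist_incl_mx mul_mx_row mulmx1 mulmx0 => <-.
by rewrite hsubmxK.
Qed.

Lemma Ext1_vanish_twist : Ext_vanish 1 X Y ->
  exists sg : forall u, 'M[k]_(rdim X u, rdim Y u),
    forall c u u', rarr X c u u' *m sg u' = sg u *m rarr Y c u u' + F c u u'.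
Proof.
move=> ext.
have [sigma sec] := Ext1_vanish_split ext twist_incl_free twist_proj_surj twist_exact.
have rsub1 u : rsubmx (hmap sigma u) = 1%:M.
  by have := sec u; rewrite -{1}[hmap sigma u]hsubmxK mul_row_col mulmx0 mulmx1 add0r.
exists (fun u => lsubmx (hmap sigma u)) => c u u'.
have := hcomm sigma c u u'; rewrite -[hmap sigma u]hsubmxK rsub1 /= /twist_arr.
rewrite row_mxKl mul_row_block mul1mx => /(congr1 lsubmx).
by rewrite row_mxKl -mulmx_lsub.
Qed.

End TwistedExtension.

Section ClusterTilting.
Variables (k : fieldType) (V E : finType) (s t : E -> V).
Local Notation qrep := (rep k s t).

Lemma projective_Ext_vanish (X Y : qrep) i :
  projective X -> (0 < i)%N -> Ext_vanish i X Y.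
Proof.
case: i => [//|j] Xproj _.
pose P (m : nat) := if m is 0 then X else zero_rep k s t.
exists P, (fun j => zero_hom (P j.+1) (P j)), (id_hom X); split.
  split=> [[|m] //||v|m v]; first exact: zero_rep_projective.
  - by move=> v; rewrite /= row_full_unit unitmx1.
  - split; first by rewrite [LHS]flatmx0.
    by rewrite -[kermx _]mulmx1 mulmx_ker sub0mx.
  - by split; [rewrite [LHS]flatmx0 | rewrite [kermx _]flatmx0 sub0mx].
by move=> f _; exists (zero_hom (P j) Y) => v; rewrite [LHS]flatmx0 [RHS]flatmx0.
Qed.

Lemma inj_rep_Ext_vanish (Y : qrep) (P : nat -> qrep) (d : forall j, hom (P j.+1) (P j))
  (eps : hom (P 0%N) Y) w i :
  proj_resolution d eps -> (0 < i)%N -> Ext_vanish i Y (inj_rep k s t w).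
Proof.
case: i => [//|j] res _; exists P, d, eps; split=> // f df0.
case: res => _ _ _ d_exact; apply: inj_rep_extend => u.
by have /submxP[D ->] := (d_exact j u).2; rewrite -mulmxA -/(hcompE _ _ _) df0 mulmx0.
Qed.

Variables (n : nat) (C : qrep -> Prop).
Hypotheses (n_ge2 : (2 <= n)%N) (C_ct : n_cluster_tilting n C).

Lemma proj_rep_in_ct x : C (proj_rep k s t x).
Proof.
case: C_ct => _ CExt _; apply/CExt => Y _ i /andP[i_gt0 _].
exact/projective_Ext_vanish/i_gt0/proj_rep_projective.
Qed.

Lemma Ext1_vanish_in_ct X Y : C X -> C Y -> Ext_vanish 1 X Y.
Proof. by case: C_ct => _ CExt _ /CExt XExt /XExt; apply; rewrite /= n_ge2. Qed.

Lemma inj_rep_in_ct w : C (inj_rep k s t w).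
Proof.
case: C_ct => _ _ ExtC; apply/ExtC => Y CY i /andP[i_gt0 _].
(* Ext^1(Y, P_w) = 0 is used only for the projective resolution of Y it carries. *)
have [P [d [eps [res _]]]] := Ext1_vanish_in_ct CY (proj_rep_in_ct w).
exact: inj_rep_Ext_vanish res i_gt0.
Qed.

End ClusterTilting.

Section Twist.
Variables (k : fieldType) (V E : finType) (s t : E -> V) (w x : V) (a b c0 : E).
Hypotheses (sc0 : s c0 = s a) (tc0 : t c0 = t b).

(* Along c0, send the basis vector [Some a] of I_w at s a to the basis
   vector [Some b] of P_x at t b. *)
Definition twist_mx c u u' :
  'M[k]_(rdim (inj_rep k s t w) u, rdim (proj_rep k s t x) u') :=
  (c == c0)%:R *: ind_mx (proj_basis t s w u) (proj_basis s t x u') (Some a) (Some b).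

Lemma twist_mx_supp c u u' : (u, u') != (s c, t c) -> twist_mx c u u' = 0.
Proof.
move=> uu'; rewrite /twist_mx; case: eqP => [ce|_]; last by rewrite scale0r.
rewrite scale1r ind_mx_eq0 //; apply: contra uu'; rewrite ce !proj_basis_Some.
by case/andP => /andP[_ /eqP<-] /andP[_ /eqP<-]; rewrite sc0 tc0.
Qed.

Lemma twist_mx_entry c u u' i j :
  twist_mx c u u' i j
    = (c == c0)%:R * ((enum_val i == Some a)%:R * (enum_val j == Some b)%:R).
Proof. by rewrite !mxE. Qed.

Lemma twist_mx_rarr c d u v v' :
  twist_mx c u v *m rarr (proj_rep k s t x) d v v' = 0.
Proof. by rewrite -scalemxAl /= /proj_arr ind_mx_mul0 ?scaler0. Qed.

Lemma rarr_twist_mx c d u v v' :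
  rarr (inj_rep k s t w) c u v *m twist_mx d v v' = 0.
Proof. by rewrite -scalemxAr /= /proj_arr tr_ind_mx ind_mx_mul0 ?scaler0. Qed.

End Twist.

Section DegreeBound.
Variables (k : fieldType) (V E : finType) (s t : E -> V) (n : nat) (C : rep k s t -> Prop).
Hypotheses (n_ge2 : (2 <= n)%N) (C_ct : n_cluster_tilting n C).

Lemma twist_splits w x a b c0 : s c0 = s a -> t c0 = t b ->
  exists sg : forall u, 'M[k]_(rdim (inj_rep k s t w) u, rdim (proj_rep k s t x) u),
    forall c u u', rarr (inj_rep k s t w) c u u' *m sg u'
      = sg u *m rarr (proj_rep k s t x) c u u' + @twist_mx k _ _ s t w x a b c0 c u u'.
Proof.
move=> sc0 tc0; apply: (Ext1_vanish_twist (twist_mx_supp _ _ _ sc0 tc0)).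
- exact: twist_mx_rarr.
- exact: rarr_twist_mx.
exact: (Ext1_vanish_in_ct n_ge2 C_ct (inj_rep_in_ct n_ge2 C_ct w) (proj_rep_in_ct C_ct x)).
Qed.

Lemma out_arrows_eq a1 a2 a3 :
  s a1 = s a2 -> s a3 = s a2 -> a1 != a2 -> a1 != a3 -> a3 = a2.
Proof.
move=> s12 s32 a12 a13.
have [sg sgP] := twist_splits (t a1) (s a2) (esym s12) (erefl (t a2)).
have a1_in : Some a1 \in proj_basis t s (t a1) (s a2) by rewrite proj_basis_Some s12 !eqxx.
pose i1 := enum_rank_in a1_in (Some a1).
have key c : s c = s a2 -> c != a1 ->
    (sg (s a2) *m (ind_row _ None)^T) i1 0 + (c == a2)%:R = 0.
  move=> sc ca1; have c_in : Some c \in proj_basis s t (s a2) (t c).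
    by rewrite proj_basis_Some sc !eqxx.
  move/matrixP: (sgP c (s a2) (t c)) => /(_ i1 (enum_rank_in c_in (Some c))).
  rewrite /= /proj_arr tr_ind_mx ind_mx_mulmx_entry [X in _ = X]mxE.
  rewrite mulmx_ind_mx_entry twist_mx_entry !enum_rankK_in //= !(inj_eq Some_inj).
  by rewrite eq_sym (negbTE ca1) !eqxx mul0r mul1r mulr1 -natrM mulnb andbb.
apply/eqP; apply: contraT => a32.
have := key a3 s32; rewrite eq_sym a13 (negbTE a32) addr0 => /(_ isT) alpha0.
have := key a2 erefl; rewrite eq_sym a12 alpha0 eqxx add0r => /(_ isT) /eqP.
by rewrite oner_eq0.
Qed.

Lemma in_arrows_eq b1 b2 b3 :
  t b1 = t b2 -> t b3 = t b2 -> b1 != b2 -> b1 != b3 -> b3 = b2.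
Proof.
move=> t12 t32 b12 b13.
have [sg sgP] := twist_splits (t b2) (s b1) (erefl (s b2)) (esym t12).
have b1_in : Some b1 \in proj_basis s t (s b1) (t b2) by rewrite proj_basis_Some t12 !eqxx.
pose j1 := enum_rank_in b1_in (Some b1).
have key c : t c = t b2 -> c != b1 ->
    (ind_row _ None *m sg (t b2)) 0 j1 = (c == b2)%:R.
  move=> tc cb1; have c_in : Some c \in proj_basis t s (t b2) (s c).
    by rewrite proj_basis_Some tc !eqxx.
  move/matrixP: (sgP c (s c) (t b2)) => /(_ (enum_rank_in c_in (Some c)) j1).
  rewrite /= /proj_arr tr_ind_mx ind_mx_mulmx_entry [X in _ = X]mxE.
  rewrite mulmx_ind_mx_entry twist_mx_entry !enum_rankK_in //= !(inj_eq Some_inj).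
  by rewrite [b1 == c]eq_sym (negbTE cb1) !eqxx mulr0 add0r mul1r mulr1 -natrM mulnb andbb.
apply/eqP; apply: contraT => b32.
have := key b3 t32; rewrite eq_sym b13 (negbTE b32) => /(_ isT) beta0.
have := key b2 erefl; rewrite eq_sym b12 beta0 eqxx => /(_ isT) /eqP.
by rewrite eq_sym oner_eq0.
Qed.

End DegreeBound.

Lemma card_le2_of_eq_others (T : finType) (A : {set T}) :
  (forall a1 a2 a3, a1 \in A -> a2 \in A -> a3 \in A -> a1 != a2 -> a1 != a3 -> a3 = a2) ->
  (#|A| <= 2)%N.
Proof.
move=> others_eq; rewrite leqNgt; apply/card_gt2P.
move=> -[a1 [a2 [a3 [[A1 A2 A3] [a12 a23 a31]]]]].
by move: a23; rewrite (others_eq a1 a2 a3) ?eqxx // eq_sym.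
Qed.

Theorem lemma2p1 (k : fieldType) (V E : finType) (s t : E -> V) (n : nat)
  (C : rep k s t -> Prop) :
  quiver_connected s t -> (2 <= n)%N -> n_cluster_tilting n C ->
  forall v : V, (indeg t v <= 2)%N /\ (outdeg s v <= 2)%N.
Proof.
move=> _ n_ge2 C_ct v; split; apply: card_le2_of_eq_others => c1 c2 c3;
  rewrite !inE => /eqP e1 /eqP e2 /eqP e3.
- by apply: (in_arrows_eq n_ge2 C_ct); rewrite ?e1 ?e2 ?e3.
- by apply: (out_arrows_eq n_ge2 C_ct); rewrite ?e1 ?e2 ?e3.
Qed.
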